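(* The set of real characteristic matrices on $C^5(8)^*$ modulo left multiplication by $GL(5,\mathbb{Z}/2)$ has exactly two elements, represented by $$\begin{pmatrix}1&0&0&0&0&0&0&1\\0&1&0&0&0&1&0&1\\0&0&1&0&0&1&1&1\\0&0&0&1&0&1&1&0\\0&0&0&0&1&0&1&1\end{pmatrix}\quad\text{and}\quad\begin{pmatrix}1&0&0&0&0&0&0&1\\0&1&0&0&0&1&1&0\\0&0&1&0&0&0&1&1\\0&0&0&1&0&1&1&1\\0&0&0&0&1&1&0&1\end{pmatrix}.$$
   Context: $C^5(8)^*$ is the dual of the cyclic polytope $C^5(8)$, a simple $5$-polytope with facets $F_1,\ldots,F_8$ labeled so that five facets $F_{i_1},\ldots,F_{i_5}$ meet at a vertex iff $\{i_1,\ldots,i_5\}$ is a disjoint union of sets of the form $I_j=\{j,j+1\}\cap\{1,\ldots,8\}$, $j\in\{0,\ldots,8\}$. A real characteristic matrix on it is a $5\times 8$ matrix over $\mathbb{Z}/2$ whose columns $\boldsymbol\lambda_{i_1},\ldots,\boldsymbol\lambda_{i_5}$ have determinant $1$ whenever $F_{i_1},\ldots,F_{i_5}$ meet at a vertex; $GL(5,\mathbb{Z}/2)$ acts by left multiplication. *)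

From mathcomp Require Import all_boot all_order all_algebra.
Set Implicit Arguments. Unset Strict Implicit. Unset Printing Implicit Defensive.
Import GRing.Theory.
Local Open Scope ring_scope.

(* Facets F_1..F_8 are indexed by i : 'I_8, facet F_(i+1) <-> i. *)

(* I_j = {j, j+1} \cap {1,..,8}, for j in {0,..,8} (j : 'I_9). *)
Definition Iset (j : 'I_9) : {set 'I_8} :=
  [set i : 'I_8 | (i.+1 == j)%N || (i.+1 == j.+1)%N].

Definition disjoint_union_of_I (S : {set 'I_8}) : Prop :=
  exists J : {set 'I_9},
    (forall j k, j \in J -> k \in J -> j != k -> [disjoint Iset j & Iset k]) /\
    S = \bigcup_(j in J) Iset j.

Definition is_vertex (S : {set 'I_8}) : Prop :=
  #|S| = 5%N /\ disjoint_union_of_I S.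

Definition real_char_matrix (M : 'M['F_2]_(5, 8)) : Prop :=
  forall f : 'I_5 -> 'I_8, injective f -> is_vertex [set f i | i : 'I_5] ->
    \det (colsub f M) = 1.

Definition GL_equiv (M N : 'M['F_2]_(5, 8)) : Prop :=
  exists G : 'M['F_2]_5, G \in unitmx /\ N = G *m M.

Definition mx_of_rows (r : seq (seq nat)) : 'M['F_2]_(5, 8) :=
  \matrix_(i < 5, j < 8) ((nth 0%N (nth [::] r i) j)%:R : 'F_2).

Definition A1 : 'M['F_2]_(5, 8) := mx_of_rows
  [:: [:: 1; 0; 0; 0; 0; 0; 0; 1];
      [:: 0; 1; 0; 0; 0; 1; 0; 1];
      [:: 0; 0; 1; 0; 0; 1; 1; 1];
      [:: 0; 0; 0; 1; 0; 1; 1; 0];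
      [:: 0; 0; 0; 0; 1; 0; 1; 1]]%N.

Definition A2 : 'M['F_2]_(5, 8) := mx_of_rows
  [:: [:: 1; 0; 0; 0; 0; 0; 0; 1];
      [:: 0; 1; 0; 0; 0; 1; 1; 0];
      [:: 0; 0; 1; 0; 0; 0; 1; 1];
      [:: 0; 0; 0; 1; 0; 1; 1; 1];
      [:: 0; 0; 0; 0; 1; 1; 0; 1]]%N.

(* Over F_2 a 5x5 minor has determinant 1 iff it is invertible, i.e. iff its columns
   span F_2^5; this is invariant under left multiplication by GL(5, F_2).  Since
   F_1, ..., F_5 meet at a vertex, every real characteristic matrix is equivalent to one
   whose first five columns form the identity, and two such normal forms are equivalent
   only if they are equal.  The 20 vertices are the disjoint unions of the I_j of size 5;
   choosing the last three columns one at a time and discarding a choice as soon as a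
   vertex among the columns chosen so far fails leaves exactly the normal forms A1, A2. *)

From mathcomp Require Import all_boot all_order all_algebra.
From mathcomp Require Import zify.
Set Implicit Arguments. Unset Strict Implicit. Unset Printing Implicit Defensive.

Fixpoint bitvecs (n : nat) : seq (seq bool) :=
  if n is n'.+1 then [seq b :: l | b <- [:: false; true], l <- bitvecs n'] else [:: [::]].

Lemma mem_bitvecs n l : (l \in bitvecs n) = (size l == n).
Proof.
elim: n l => [|n IHn] l; first by case: l.
apply/allpairsP/idP => [[[b l'] [_ /=]]|]; first by rewrite IHn => /eqP <- ->.
by case: l => [|b l] //; rewrite eqSS -IHn => ?; exists (b, l); case: b.
Qed.

Lemma enum_set_inj (T : finType) (S : {set T}) m :
  #|S| = m -> exists f : 'I_m -> T, injective f /\ [set f i | i : 'I_m] = S.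
Proof.
move=> cardS; exists (fun i => enum_val (cast_ord (esym cardS) i)); split.
- by move=> i j /enum_val_inj /cast_ord_inj.
- apply/setP => x; apply/imsetP/idP => [[i _ ->]|Sx]; first exact: enum_valP.
  by exists (cast_ord cardS (enum_rank_in Sx x)); rewrite // cast_ordK enum_rankK_in.
Qed.

Definition colset (s : seq nat) : {set 'I_8} := [set j : 'I_8 | val j \in s].

Lemma card_colset s : uniq s -> all (gtn 8) s -> #|colset s| = size s.
Proof.
move=> uniq_s /allP s_lt8; rewrite cardE -(size_map val).
apply/perm_size/uniq_perm => // [|k]; first by rewrite (map_inj_uniq val_inj) enum_uniq.
apply/mapP/idP => [[j]|k_s]; first by rewrite mem_enum inE => ? ->.
by exists (Ordinal (s_lt8 k k_s)); rewrite ?mem_enum ?inE.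
Qed.

Lemma disjoint_Iset (j k : 'I_9) :
  j != k -> [disjoint Iset j & Iset k] = (j.+1 != k) && (k.+1 != j).
Proof.
rewrite -(inj_eq val_inj) /= => /eqP jk; apply/pred0P/andP => [dis | [/eqP jk1 /eqP kj1] i /=].
- split; apply/eqP => E.
  + have j8 : (j < 8)%N by move: (ltn_ord k); rewrite -E.
    by have /= := dis (Ordinal j8); rewrite !inE /= E !eqxx orbT.
  + have k8 : (k < 8)%N by move: (ltn_ord j); rewrite -E.
    by have /= := dis (Ordinal k8); rewrite !inE /= E !eqxx orbT.
- by rewrite !inE; apply/negbTE/negP => /andP [/orP [] /eqP ij /orP [] /eqP ik]; lia.
Qed.

Lemma mem_bigcup_Iset (J : {set 'I_9}) (i : 'I_8) :
  (i \in \bigcup_(j in J) Iset j) = (inord i \in J) || (inord i.+1 \in J).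
Proof.
have i9 : (i < 9)%N := ltnW (ltn_ord i).
have i1_9 : (i.+1 < 9)%N := ltn_ord i.
apply/bigcupP/orP => [[j jJ]|[] iJ].
- rewrite inE => /orP [] /eqP ij; [right | left];
    by rewrite (_ : inord _ = j) //; apply: val_inj; rewrite /= inordK // ?ij //; case: ij.
- by exists (inord i); rewrite // inE inordK // eqxx orbT.
- by exists (inord i.+1); rewrite // inE inordK ?eqxx.
Qed.

(* A list [js] encodes the set [J] of indices [k] with [nth false js k]; facet [i]
   (0-based) lies in [I_i] and in [I_(i+1)], so [shadow js] is the union of the [I_j]. *)
Definition shadow (js : seq bool) : seq nat :=
  [seq i <- iota 0 8 | nth false js i || nth false js i.+1].

Definition separated (js : seq bool) : bool :=
  ~~ has (fun k => nth false js k && nth false js k.+1) (iota 0 8).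

Definition vertex_list : seq (seq nat) :=
  [seq shadow js | js <- bitvecs 9 & separated js && (size (shadow js) == 5)].

Lemma shadow_bounded js : all (gtn 8) (shadow js).
Proof. by apply/allP => i; rewrite mem_filter mem_iota => /andP [_ /andP []]. Qed.

Lemma card_colset_shadow js : #|colset (shadow js)| = size (shadow js).
Proof. by rewrite card_colset ?filter_uniq ?iota_uniq ?shadow_bounded. Qed.

Lemma vertex_list_bounded s : s \in vertex_list -> all (gtn 8) s.
Proof. by case/mapP => js _ ->; apply: shadow_bounded. Qed.

Lemma vertex_list_is_vertex s : s \in vertex_list -> is_vertex (colset s).
Proof.
case/mapP => js; rewrite mem_filter => /andP [/andP [sep_js /eqP size5] _] ->.
split; first by rewrite card_colset_shadow.
exists [set k : 'I_9 | nth false js k]; split.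
- move=> j k; rewrite !inE => jJ kJ jk; rewrite disjoint_Iset //.
  have adj l : (l < 8)%N -> nth false js l -> nth false js l.+1 -> False.
    by move=> l8 l1 l2; move/hasPn: sep_js => /(_ l); rewrite mem_iota l8 l1 l2 => /(_ isT).
  by apply/andP; split; apply/eqP => E; [apply: (adj j) | apply: (adj k)];
    rewrite ?E //; move: (ltn_ord j) (ltn_ord k); lia.
- apply/setP => i; rewrite mem_bigcup_Iset !inE mem_filter mem_iota ltn_ord /=.
  by rewrite !inordK //; move: (ltn_ord i); lia.
Qed.

Lemma is_vertex_in_list S : is_vertex S -> exists2 s, s \in vertex_list & S = colset s.
Proof.
case=> card5 [J [dis SE]]; subst S.
pose js := [seq inord k \in J | k <- iota 0 9].
have nth_js k : (k < 9)%N -> nth false js k = (inord k \in J).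
  by move=> k9; rewrite (nth_map 0) ?size_iota // nth_iota.
have shadowE : \bigcup_(j in J) Iset j = colset (shadow js).
  apply/setP => i; rewrite mem_bigcup_Iset inE /= mem_filter mem_iota ltn_ord andbT.
  by rewrite leq0n andbT !nth_js //; move: (ltn_ord i); lia.
exists (shadow js) => //; apply: map_f.
rewrite mem_filter mem_bitvecs size_map size_iota eqxx -card_colset_shadow -shadowE card5.
rewrite eqxx !andbT; apply/hasPn => k; rewrite mem_iota => /andP [_ k8].
have k9 : (k < 9)%N := ltnW k8.
have k1_9 : (k.+1 < 9)%N := k8.
rewrite nth_js // (nth_js k.+1) //; apply/negP => /andP [kJ k1J].
have k_neq : inord k != inord k.+1 :> 'I_9.
  by rewrite -(inj_eq val_inj) /= !inordK // neq_ltn ltnSn.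
by have := dis _ _ kJ k1J k_neq; rewrite disjoint_Iset // !inordK // eqxx.
Qed.

Import GRing.Theory.
Local Open Scope ring_scope.

Lemma F2_eq01 (x : 'F_2) : x = (x == 1)%:R.
Proof. by case: x => [[|[|]] //] ?; apply: val_inj. Qed.

Lemma F2_natr (n : nat) : n%:R = (odd n)%:R :> 'F_2.
Proof.
have two0 : 2%:R = 0 :> 'F_2 by apply/eqP.
by rewrite -{1}(odd_double_half n) natrD -mul2n natrM two0 mul0r addr0.
Qed.

Lemma F2_natr_eq1 (b : bool) : (b%:R == 1 :> 'F_2) = b.
Proof. by case: b; rewrite ?eqxx // eq_sym oner_eq0. Qed.

Lemma F2_unitmx n (A : 'M['F_2]_n) : (A \in unitmx) = (\det A == 1).
Proof. by rewrite unitmxE unitfE [\det A]F2_eq01; case: (_ == 1). Qed.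

(* The columns of [M] indexed by [S] span the column space iff no nonzero linear
   form vanishes on all of them. *)
Definition spanning_cols (F : fieldType) m n (M : 'M[F]_(m, n)) (S : {set 'I_n}) :=
  forall v : 'rV[F]_m, (forall j, j \in S -> (v *m M) 0 j = 0) -> v = 0.

Lemma colsub_unitmx_spanning (F : fieldType) m n (M : 'M[F]_(m, n)) (f : 'I_m -> 'I_n) :
  colsub f M \in unitmx <-> spanning_cols M [set f i | i : 'I_m].
Proof.
have colsubE (v : 'rV[F]_m) : (v *m colsub f M == 0) = [forall i, (v *m M) 0 (f i) == 0].
  apply/eqP/forallP => [/matrixP vM0 i | vM0]; last apply/matrixP => r i.
    by move: (vM0 0 i); rewrite mulmx_colsub !mxE => ->.
  by rewrite mulmx_colsub (ord1 r) [LHS]mxE [RHS]mxE; apply/eqP.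
rewrite -row_free_unit; split => [/row_free_inj inj_f v vM0 | span].
- apply: inj_f; rewrite /= mul0mx; apply/eqP; rewrite colsubE; apply/forallP => i.
  by rewrite vM0 //; apply: imset_f.
- apply/inj_row_free => v /eqP; rewrite colsubE => /forallP vM0.
  by apply: span => _ /imsetP [i _ ->]; apply/eqP.
Qed.

Lemma det_colsub_spanning m n (M : 'M['F_2]_(m, n)) (f : 'I_m -> 'I_n) :
  \det (colsub f M) = 1 <-> spanning_cols M [set f i | i : 'I_m].
Proof. by rewrite -colsub_unitmx_spanning F2_unitmx; split => /eqP. Qed.

Lemma real_char_matrixP (M : 'M['F_2]_(5, 8)) :
  real_char_matrix M <-> forall s, s \in vertex_list -> spanning_cols M (colset s).
Proof.
split => [rcM s s_vert | span f inj_f /is_vertex_in_list [s s_vert Sf]].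
- have [card5 _] := vertex_list_is_vertex s_vert.
  have [f [inj_f fS]] := enum_set_inj card5.
  rewrite -fS; apply/det_colsub_spanning/rcM => //.
  by rewrite fS; apply: vertex_list_is_vertex.
- by apply/det_colsub_spanning; rewrite Sf; apply: span.
Qed.

Lemma real_char_matrix_mulmx (G : 'M['F_2]_5) (M : 'M['F_2]_(5, 8)) :
  G \in unitmx -> real_char_matrix M -> real_char_matrix (G *m M).
Proof.
move=> /[!F2_unitmx] /eqP detG rcM f inj_f vert_f.
by rewrite -mulmx_colsub det_mulmx detG rcM ?mul1r.
Qed.

Definition normal_form (M : 'M['F_2]_(5, 8)) : Prop := colsub (@lshift 5 3) M = 1%:M.

Lemma GL_equiv_normal M N :
  normal_form M -> normal_form N -> GL_equiv M N -> M = N.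
Proof.
move=> normM normN [G [_ NGM]].
have G1 : G = 1%:M by rewrite -[G]mulmx1 -normM mulmx_colsub -NGM normN.
by rewrite NGM G1 mul1mx.
Qed.

Lemma real_char_normalize M : real_char_matrix M ->
  exists2 G, G \in unitmx & real_char_matrix (G *m M) /\ normal_form (G *m M).
Proof.
move=> rcM; set B := colsub (@lshift 5 3) M.
have detB : \det B = 1.
  apply: rcM; first exact: lshift_inj.
  rewrite (_ : [set _ | _ : 'I_5] = colset (iota 0 5)); first by apply: vertex_list_is_vertex.
  apply/setP => j; rewrite inE mem_iota add0n leq0n.
  apply/imsetP/idP => [[i _ ->]|/= j5]; first exact: ltn_ord i.
  by exists (Ordinal j5) => //; apply: val_inj.
have unitB : B \in unitmx by rewrite F2_unitmx detB.
exists (invmx B); rewrite ?unitmx_inv //; split.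
- by apply: real_char_matrix_mulmx rcM; rewrite unitmx_inv.
- by rewrite /normal_form -mulmx_colsub mulVmx.
Qed.

(* Built with [mx_of_rows] so that a computed list of columns gives a matrix that is
   convertible to [A1] or [A2]. *)
Definition mx_of_cols (cs : seq (seq bool)) : 'M['F_2]_(5, 8) :=
  mx_of_rows [seq [seq nat_of_bool (nth false (nth [::] cs j) i) | j <- iota 0 8]
                | i <- iota 0 5].

Lemma mx_of_colsE cs i j : mx_of_cols cs i j = (nth false (nth [::] cs j) i)%:R.
Proof. by rewrite mxE !(nth_map 0%N) ?size_iota // !nth_iota. Qed.

Definition cols_of (M : 'M['F_2]_(5, 8)) : seq (seq bool) :=
  [seq [seq M (inord i) (inord j) == 1 | i <- iota 0 5] | j <- iota 0 8].

Lemma cols_ofK M : mx_of_cols (cols_of M) = M.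
Proof.
apply/matrixP => i j.
by rewrite mx_of_colsE !(nth_map 0%N) ?size_iota // !nth_iota // !inord_val -F2_eq01.
Qed.

Definition dotb (v c : seq bool) : bool :=
  odd (count (fun i => nth false v i && nth false c i) (iota 0 5)).

Lemma mulmx_row_cols (v : seq bool) cs j :
  ((\row_i (nth false v i)%:R) *m mx_of_cols cs) 0 j = (dotb v (nth [::] cs j))%:R.
Proof.
rewrite mxE (eq_bigr (fun i : 'I_5 => (nth false v i && nth false (nth [::] cs j) i)%:R)).
  rewrite -natr_sum F2_natr /dotb -sumn_count sumnE big_map.
  by rewrite -[iota 0 5]/(index_iota 0 5) big_mkord.
by move=> i _; rewrite mx_of_colsE mxE -natrM mulnb.
Qed.

Definition spanningb (cs : seq (seq bool)) (s : seq nat) : bool :=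
  all (fun v => has id v ==> has (fun j => dotb v (nth [::] cs j)) s) (bitvecs 5).

Lemma spanningP cs s :
  all (gtn 8) s -> reflect (spanning_cols (mx_of_cols cs) (colset s)) (spanningb cs s).
Proof.
move=> /allP s_lt8; apply: (iffP allP) => [span w w0 | span v].
- pose v := [seq w 0 (inord i) == 1 | i <- iota 0 5].
  have wE : w = \row_i (nth false v i)%:R.
    apply/matrixP => r i; rewrite (ord1 r) mxE.
    by rewrite (nth_map 0%N) ?size_iota // nth_iota // inord_val -F2_eq01.
  have := span v; rewrite mem_bitvecs size_map size_iota eqxx => /(_ isT) /implyP.
  case: (boolP (has id v)) => [_ /(_ isT) /hasP [j js dot_j] | /hasPn v0 _].
    have j8 : (j < 8)%N := s_lt8 j js.
    have := w0 (inord j); rewrite inE /= inordK // => /(_ js).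
    by rewrite wE mulmx_row_cols inordK // dot_j => /eqP; rewrite oner_eq0.
  apply/matrixP => r i; rewrite wE (ord1 r) !mxE.
  have /negbTE -> // : ~~ nth false v i by apply: v0; rewrite mem_nth ?size_map ?size_iota.
- rewrite mem_bitvecs => /eqP size_v; apply/implyP => /hasP [b /(nthP false) [k k_lt vk]].
  move=> b_true; apply/negPn/negP => /hasPn no_dot.
  have w0 : \row_i (nth false v i)%:R = 0 :> 'rV['F_2]_5.
    apply: span => j; rewrite inE => /no_dot dot_j.
    by rewrite mulmx_row_cols (negbTE dot_j).
  have k5 : (k < 5)%N by rewrite -size_v.
  have /matrixP /(_ 0 (inord k)) := w0.
  by rewrite !mxE inordK // vk b_true => /eqP; rewrite oner_eq0.
Qed.

Definition spans_all (cs : seq (seq bool)) : bool :=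
  all (spanningb cs) [seq s <- vertex_list | all (gtn (size cs)) s].

Lemma real_char_spans_all cs :
  size cs = 8%N -> real_char_matrix (mx_of_cols cs) <-> spans_all cs.
Proof.
move=> size_cs; rewrite real_char_matrixP /spans_all size_cs.
split => [span | /allP span s s_vert]; last first.
  have s_lt8 := vertex_list_bounded s_vert.
  by apply/spanningP/span; rewrite // mem_filter s_lt8.
apply/allP => s; rewrite mem_filter => /andP [s_lt8 s_vert].
exact/spanningP/span.
Qed.

Lemma spanningb_cat cs ds s :
  all (gtn (size cs)) s -> spanningb (cs ++ ds) s = spanningb cs s.
Proof.
move=> /allP s_lt; apply: eq_all => v; congr (_ ==> _); apply: eq_in_has => j /s_lt js.
by rewrite nth_cat ifT.
Qed.

Lemma spans_all_prefix cs ds : spans_all (cs ++ ds) -> spans_all cs.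
Proof.
move=> /allP span; apply/allP => s; rewrite mem_filter => /andP [s_lt s_vert].
rewrite -(spanningb_cat ds) //; apply: span; rewrite mem_filter s_vert andbT size_cat.
by apply: sub_all s_lt => j /= /leq_trans; apply; apply: leq_addr.
Qed.

Fixpoint extensions (k : nat) (cs : seq (seq bool)) : seq (seq (seq bool)) :=
  if k is k'.+1 then
    flatten [seq extensions k' (rcons cs c) | c <- bitvecs 5 & spans_all (rcons cs c)]
  else [:: cs].

Lemma extensionsS k cs :
  extensions k.+1 cs =
  flatten [seq extensions k (rcons cs c) | c <- bitvecs 5 & spans_all (rcons cs c)].
Proof. by []. Qed.

Lemma mem_extensions cs ds :
  all (fun d => size d == 5%N) ds -> spans_all (cs ++ ds) ->
  cs ++ ds \in extensions (size ds) cs.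
Proof.
elim: ds cs => [|d ds IHds] cs; first by rewrite cats0 inE.
move=> /andP [size_d size_ds]; rewrite -cat_rcons extensionsS => span.
apply/flattenP; exists (extensions (size ds) (rcons cs d)); last exact: IHds.
have d_ok : d \in [seq c <- bitvecs 5 | spans_all (rcons cs c)].
  by rewrite mem_filter mem_bitvecs size_d andbT (spans_all_prefix span).
exact: map_f d_ok.
Qed.

Lemma extensions_prefix k cs ds :
  ds \in extensions k cs -> exists2 es, ds = cs ++ es & size es = k.
Proof.
elim: k cs => [|k IHk] cs; first by rewrite inE => /eqP ->; exists [::]; rewrite ?cats0.
rewrite extensionsS => /flattenP [_ /mapP [c _ ->] /IHk [es -> size_es]].
by exists (c :: es); rewrite ?cat_rcons //= size_es.
Qed.

Lemma extensions_spans_all k cs ds : ds \in extensions k.+1 cs -> spans_all ds.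
Proof.
elim: k cs => [|k IHk] cs; rewrite extensionsS => /flattenP [_ /mapP [c c_ok ->]];
  last exact: IHk.
by rewrite inE => /eqP ->; move: c_ok; rewrite mem_filter => /andP [].
Qed.

Definition unit_cols : seq (seq bool) := [seq [seq i == j | i <- iota 0 5] | j <- iota 0 5].

Lemma normal_form_unit_cols es : normal_form (mx_of_cols (unit_cols ++ es)).
Proof.
apply/matrixP => i j; rewrite [LHS]mxE mx_of_colsE [RHS]mxE.
rewrite nth_cat size_map size_iota /= ltn_ord.
by rewrite !(nth_map 0%N) ?size_iota // !nth_iota.
Qed.

Lemma cols_of_normal M :
  normal_form M -> cols_of M = unit_cols ++ drop 5 (cols_of M).
Proof.
move=> /matrixP normM; rewrite /cols_of -[iota 0 8]/(iota 0 (5 + 3)) iotaD map_cat.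
rewrite drop_size_cat ?size_map ?size_iota //; congr (_ ++ _); rewrite /unit_cols.
apply/eq_in_map => j; rewrite mem_iota => /andP [_ j5].
apply/eq_in_map => i; rewrite mem_iota => /andP [_ i5].
have := normM (inord i) (inord j); rewrite !mxE /=.
have -> : @lshift 5 3 (inord j) = inord j.
  by apply: val_inj; rewrite /= !inordK //; apply: ltn_trans j5 _.
by move=> ->; rewrite F2_natr_eq1 -(inj_eq val_inj) /= !inordK.
Qed.

Lemma extensions_unit_cols :
  [seq mx_of_cols cs | cs <- extensions 3 unit_cols] = [:: A2; A1].
Proof. by vm_compute (extensions 3 unit_cols). Qed.

Lemma normal_real_char_mem M :
  real_char_matrix M -> normal_form M -> M \in [:: A2; A1].
Proof.
move=> rcM normM; rewrite -extensions_unit_cols -(cols_ofK M) (cols_of_normal normM).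
apply: map_f; have := @mem_extensions unit_cols (drop 5 (cols_of M)).
rewrite size_drop size_map size_iota; apply; last first.
  by rewrite -cols_of_normal // -real_char_spans_all ?cols_ofK // size_map size_iota.
by apply/allP => c /mem_drop /mapP [j _ ->]; rewrite size_map size_iota.
Qed.

Lemma normal_forms_real_char A :
  A \in [:: A2; A1] -> real_char_matrix A /\ normal_form A.
Proof.
rewrite -extensions_unit_cols => /mapP [cs ext_cs ->].
have [es cs_es size_es] := extensions_prefix ext_cs.
split; last by rewrite cs_es; apply: normal_form_unit_cols.
apply/real_char_spans_all; last exact: extensions_spans_all ext_cs.
by rewrite cs_es size_cat size_es.
Qed.

Theorem corollary6p4 :
  [/\ real_char_matrix A1, real_char_matrix A2,
      ~ GL_equiv A1 A2 &
      forall M : 'M['F_2]_(5, 8), real_char_matrix M ->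
        GL_equiv M A1 \/ GL_equiv M A2].
Proof.
have /normal_forms_real_char [rcA1 normA1] : A1 \in [:: A2; A1] by rewrite !inE eqxx orbT.
have [rcA2 normA2] := @normal_forms_real_char A2 (mem_head _ _).
split => // [/(GL_equiv_normal normA1 normA2) |
             M /real_char_normalize [G unitG [rcGM normGM]]].
-
  by move/matrixP/(_ (inord 1) (inord 6)); rewrite !mxE !inordK.
- have := normal_real_char_mem rcGM normGM; rewrite !inE.
  by case/orP => /eqP <-; [right | left]; exists G.
Qed.
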